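(* (i) Let $X$ be a real normed linear space and $\varepsilon\in[0,2)$. Then $X$ is $\varepsilon$-smooth if and only if each two-dimensional subspace of $X$ is $\varepsilon$-smooth. (ii) Let $X$ be a real normed linear space. If $X$ is approximately smooth, then each two-dimensional subspace of $X$ is approximately smooth. Moreover, if $X$ is finite-dimensional and each of its two-dimensional subspaces is approximately smooth, then $X$ is approximately smooth.
   Context: For a normed space $Z$ and $z\in Z\setminus\{\theta\}$, $J(z)=\{f\in S_{Z^*}: f(z)=\|z\|\}$; $z$ is $\varepsilon$-smooth if $\operatorname{diam}J(z)=\sup_{f,g\in J(z)}\|f-g\|\le\varepsilon$. The space $Z$ is $\varepsilon$-smooth ($\varepsilon\in[0,2)$) if every $z\in S_Z$ is $\varepsilon$-smooth, and $Z$ is approximately smooth if it is $\varepsilon$-smooth for some $\varepsilon\in[0,2)$. Subspaces carry the restricted norm. *)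

From HB Require Import structures.
From mathcomp Require Import all_boot all_order all_algebra.
From mathcomp Require Import all_classical all_reals all_analysis.
Set Implicit Arguments. Unset Strict Implicit. Unset Printing Implicit Defensive.
Import Order.TTheory GRing.Theory Num.Theory.
Import numFieldNormedType.Exports.
Local Open Scope classical_set_scope.
Local Open Scope ring_scope.

Section Smooth.
Variables (R : realType) (V : normedModType R).

Definition is_subspace (Y : set V) : Prop :=
  Y 0 /\ forall (a : R) (x y : V), Y x -> Y y -> Y (a *: x + y).

Definition two_dim_subspace (Y : set V) : Prop :=
  exists u v : V,
    (forall a b : R, a *: u + b *: v = 0 -> a = 0 /\ b = 0) /\
    Y = [set a *: u + b *: v | a in [set: R] & b in [set: R]].

Definition finite_dimensional : Prop :=
  exists (n : nat) (e : 'I_n -> V),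
    forall x : V, exists c : 'I_n -> R, x = \sum_(i < n) c i *: e i.

(* A functional on the subspace Y is represented by f : V -> R, only its
   values on Y matter. It is linear on Y: *)
Definition linear_on (Y : set V) (f : V -> R) : Prop :=
  forall (a : R) (x y : V), Y x -> Y y -> f (a *: x + y) = a * f x + f y.

Definition opnorm_on (Y : set V) (f : V -> R) : \bar R :=
  ereal_sup [set (`|f y|)%:E | y in [set y | Y y /\ `|y| <= 1]].

Definition in_J (Y : set V) (z : V) (f : V -> R) : Prop :=
  linear_on Y f /\ opnorm_on Y f = 1%E /\ f z = `|z|.

Definition eps_smooth_pt (Y : set V) (eps : R) (z : V) : Prop :=
  forall f g : V -> R, in_J Y z f -> in_J Y z g ->
    (opnorm_on Y (fun y => (f y - g y)%R) <= eps%:E)%E.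

Definition eps_smooth (Y : set V) (eps : R) : Prop :=
  forall z : V, Y z -> `|z| = 1 -> eps_smooth_pt Y eps z.

Definition approx_smooth (Y : set V) : Prop :=
  exists eps : R, 0 <= eps < 2 /\ eps_smooth Y eps.

End Smooth.

From HB Require Import structures.
From mathcomp Require Import all_boot all_order all_algebra.
From mathcomp Require Import all_classical all_reals all_analysis.
From mathcomp Require Import ring lra.
Import Order.TTheory GRing.Theory Num.Theory.
Import numFieldNormedType.Exports.
Set Implicit Arguments. Unset Strict Implicit. Unset Printing Implicit Defensive.
Local Open Scope classical_set_scope.
Local Open Scope ring_scope.

(* A unit vector z fails to be eps-smooth exactly when there are norm-one
   functionals F, G with F z = G z = 1 and a vector w of the unit ball with
   F w - G w > eps.  Restricted to the plane spanned by z and w, F and G still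
   norm z, and their difference still exceeds eps at w, so that plane is not
   eps-smooth either.  Conversely, by Hahn-Banach every norm-one functional on a
   subspace attaining its norm at z extends to one on the whole space, and the
   diameter of J(z) can only grow under extension, so eps-smoothness passes to
   subspaces.  If a finite-dimensional space is not approximately smooth, there
   are witnesses (z, F, G, w) with gaps tending to 2; compactness of the unit
   ball and pointwise compactness of the dual ball give a limit witness with gap
   2, whose plane is eps-smooth for no eps < 2. *)

Section Functionals.
Variables (R : realType) (X : normedModType R).
Implicit Types (Y : set X) (f F G : X -> R) (u v x y z w : X).

Definition span2 u v : set X :=
  [set a *: u + b *: v | a in [set: R] & b in [set: R]].

Lemma span2_subspace u v : is_subspace (span2 u v).
Proof.
split; first by exists 0 => //; exists 0 => //; rewrite !scale0r addr0.
move=> a _ _ [a1 _ [b1 _ <-]] [a2 _ [b2 _ <-]].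
exists (a * a1 + a2) => //; exists (a * b1 + b2) => //.
by rewrite scalerDr !scalerA !scalerDl addrACA.
Qed.

Lemma span2_left u v : span2 u v u.
Proof. by exists 1 => //; exists 0 => //; rewrite scale1r scale0r addr0. Qed.

Lemma span2_right u v : span2 u v v.
Proof. by exists 0 => //; exists 1 => //; rewrite scale1r scale0r add0r. Qed.

Lemma two_dim_subspace_subspace Y : two_dim_subspace Y -> is_subspace Y.
Proof. by move=> [u [v [_ ->]]]; exact: span2_subspace. Qed.

Lemma subspaceT : is_subspace [set: X].
Proof. by []. Qed.

Lemma linear_on0 Y f : is_subspace Y -> linear_on Y f -> f 0 = 0.
Proof.
move=> [Y0 _] lf; have := lf 1 0 0 Y0 Y0.
by rewrite scale1r addr0 mul1r => /eqP; rewrite -subr_eq subrr eq_sym => /eqP.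
Qed.

Lemma linear_onZ Y f a x : is_subspace Y -> linear_on Y f -> Y x ->
  f (a *: x) = a * f x.
Proof.
move=> sY lf Yx; have := lf a x 0 Yx sY.1.
by rewrite addr0 (linear_on0 sY lf) addr0.
Qed.

Lemma opnorm_on_ge Y f y : Y y -> `|y| <= 1 -> ((`|f y|)%:E <= opnorm_on Y f)%E.
Proof. by move=> Yy y1; apply: ereal_sup_ubound; exists y. Qed.

Lemma opnorm_on_le1 Y f : is_subspace Y -> linear_on Y f ->
  (opnorm_on Y f <= 1)%E -> forall y, Y y -> `|f y| <= `|y|.
Proof.
move=> sY lf f1 y Yy.
have [->|y0] := eqVneq y 0; first by rewrite (linear_on0 sY lf) !normr0.
have ny : 0 < `|y| by rewrite normr_gt0.
have Yy1 : Y (`|y|^-1 *: y) by rewrite -[_ *: y]addr0; exact: sY.2 _ _ _ Yy sY.1.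
have y1 : `| `|y|^-1 *: y| <= 1.
  by rewrite normrZ normfV normr_id mulVf ?gt_eqF.
have := le_trans (opnorm_on_ge f Yy1 y1) f1.
rewrite lee_fin (linear_onZ _ sY lf Yy) normrM normfV normr_id.
by rewrite ler_pdivrMl // mulr1.
Qed.

Lemma opnorm_on_sub Y Y' f F : Y `<=` Y' -> (forall y, Y y -> F y = f y) ->
  (opnorm_on Y f <= opnorm_on Y' F)%E.
Proof.
move=> YY' Ff; apply: ge_ereal_sup => _ [y [Yy y1] <-].
by rewrite -Ff //; apply: opnorm_on_ge => //; exact: YY'.
Qed.

Definition contraction F := linear_on [set: X] F /\ forall x, `|F x| <= `|x|.

Lemma contraction0 F : contraction F -> F 0 = 0.
Proof. by move=> [lF _]; exact: linear_on0 lF. Qed.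

Lemma contraction_linear2 F a b x y : contraction F ->
  F (a *: x + b *: y) = a * F x + b * F y.
Proof. by move=> [lF _]; rewrite lF // (linear_onZ _ _ lF). Qed.

Lemma in_JT_contraction z F : in_J [set: X] z F -> contraction F.
Proof.
move=> [lF [F1 _]]; split => //.
by move=> x; apply: (opnorm_on_le1 _ lF) => //; rewrite F1.
Qed.

Lemma contraction_in_J Y z F : is_subspace Y -> Y z -> `|z| = 1 ->
  contraction F -> F z = 1 -> in_J Y z F.
Proof.
move=> sY Yz z1 [lF bF] Fz; split; last split; last by rewrite Fz z1.
  by move=> a x y _ _; exact: lF.
apply/eqP; rewrite eq_le; apply/andP; split.
  by apply: ge_ereal_sup => _ [y [_ y1] <-]; rewrite lee_fin (le_trans (bF y)).
have z_le1 : `|z| <= 1 by rewrite z1.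
by have := opnorm_on_ge F Yz z_le1; rewrite Fz normr1.
Qed.

(* For [`|z| = 1], [contraction F /\ F z = 1] says exactly that F is in J(z). *)
Definition J_pair z F G :=
  [/\ `|z| = 1, contraction F, contraction G, F z = 1 & G z = 1].

Lemma not_eps_smoothT eps : ~ eps_smooth [set: X] eps ->
  exists z F G w, [/\ J_pair z F G, `|w| <= 1 & eps < F w - G w].
Proof.
move=> /existsNP[z /not_implyP[_ /not_implyP[z1 /existsNP[F /existsNP[G]]]]].
move=> /not_implyP[JF /not_implyP[JG]] /negP; rewrite -ltNge.
move=> /ereal_sup_gt[_ [w [_ w1] <-]]; rewrite lte_fin.
have [cF cG] := (in_JT_contraction JF, in_JT_contraction JG).
have [Fz Gz] : F z = 1 /\ G z = 1.
  by rewrite -z1; case: JF => _ [_ ->]; case: JG => _ [_ ->].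
rewrite ltr_normr => /orP[gap|gap].
  by exists z, F, G, w.
by exists z, G, F, w; rewrite opprB in gap.
Qed.

Lemma span2_two_dim z w F G : J_pair z F G -> F w != G w ->
  two_dim_subspace (span2 z w).
Proof.
move=> [z1 cF cG Fz Gz] FGw; exists z, w; split => // a b abz.
have FGab : a + b * F w = a + b * G w.
  rewrite -[a in LHS]mulr1 -[a in RHS]mulr1 -{1}Fz -Gz.
  rewrite -(contraction_linear2 _ _ _ _ cF) -(contraction_linear2 _ _ _ _ cG).
  by rewrite abz !contraction0.
have b0 : b = 0.
  apply/eqP; move/addrI/eqP: FGab.
  by rewrite -subr_eq0 -mulrBr mulf_eq0 subr_eq0 (negbTE FGw) orbF.
split => //; move/eqP: abz; rewrite b0 scale0r addr0 scaler_eq0 => /orP[/eqP //|/eqP z0].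
by move: z1; rewrite z0 normr0 => /eqP; rewrite eq_sym oner_eq0.
Qed.

Lemma span2_not_eps_smooth z w F G eps : J_pair z F G -> `|w| <= 1 ->
  eps < F w - G w -> ~ eps_smooth (span2 z w) eps.
Proof.
move=> [z1 cF cG Fz Gz] w1 gap smooth.
have JF := contraction_in_J (span2_subspace z w) (span2_left z w) z1 cF Fz.
have JG := contraction_in_J (span2_subspace z w) (span2_left z w) z1 cG Gz.
have := smooth z (span2_left z w) z1 F G JF JG.
move=> /(le_trans (opnorm_on_ge (fun y => F y - G y) (span2_right z w) w1)).
by rewrite lee_fin leNgt (lt_le_trans gap (ler_norm _)).
Qed.

Lemma eps_smooth_of_planes eps : 0 <= eps ->
  (forall Y, two_dim_subspace Y -> eps_smooth Y eps) -> eps_smooth [set: X] eps.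
Proof.
move=> eps_ge0 planes; apply: contrapT => /not_eps_smoothT[z [F [G [w [J w1 gap]]]]].
have FGw : F w != G w by rewrite -subr_eq0 gt_eqF // (le_lt_trans eps_ge0).
exact: span2_not_eps_smooth J w1 gap (planes _ (span2_two_dim J FGw)).
Qed.

End Functionals.

Section HahnBanach.
Variables (R : realType) (X : normedModType R) (p : X -> R).
Hypothesis p_subadd : forall x y, p (x + y) <= p x + p y.
Hypothesis p_homog : forall (t : R) x, 0 < t -> p (t *: x) = t * p x.
Implicit Types (A B G H : set (X * R)) (x y d : X) (r s h : R).

(* Partial linear functionals are represented by their graphs, so that a chain
   of extensions is joined by a plain union. *)
Definition dominated_graph A :=
  [/\ forall x r s, A (x, r) -> A (x, s) -> r = s,
      forall (a : R) x y r s, A (x, r) -> A (y, s) -> A (a *: x + y, a * r + s)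
    & forall x r, A (x, r) -> r <= p x].

Lemma dominated_graphZ H (a : R) x r : dominated_graph H -> H (0, 0) ->
  H (x, r) -> H (a *: x, a * r).
Proof. by move=> [_ cH _] H00 Hxr; rewrite -[_ *: x]addr0 -[_ * r]addr0; exact: cH. Qed.

Lemma extension_constant H x0 : dominated_graph H -> H (0, 0) ->
  exists c, forall d h, H (d, h) -> h - p (d - x0) <= c /\ c <= p (d + x0) - h.
Proof.
move=> [_ cH bH] H00.
have sep d1 h1 d2 h2 : H (d1, h1) -> H (d2, h2) ->
    h1 - p (d1 - x0) <= p (d2 + x0) - h2.
  move=> H1 H2; have := bH _ _ (cH 1 _ _ _ _ H1 H2); rewrite scale1r mul1r.
  have -> : d1 + d2 = (d1 - x0) + (d2 + x0) by rewrite addrACA addNr addr0.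
  by move/le_trans/(_ (p_subadd _ _)); lra.
pose E := [set q.2 - p (q.1 - x0) | q in H].
have Eub : ubound E (p (0 + x0) - 0) by move=> _ [[d h] Hdh <-]; exact: sep.
have E0 : E !=set0 by exists (0 - p (0 - x0)), (0, 0).
exists (sup E) => d h Hdh; split.
  by apply: sup_upper_bound; [split; [|exists (p (0 + x0) - 0)] | exists (d, h)].
by apply: ge_sup => // _ [[d1 h1] H1 <-]; exact: sep.
Qed.

Section OneStepExtension.
Variables (H : set (X * R)) (x0 : X) (c : R).
Hypotheses (domH : dominated_graph H) (H00 : H (0, 0)) (x0_notin : forall r, ~ H (x0, r)).
Hypothesis c_between :
  forall d h, H (d, h) -> h - p (d - x0) <= c /\ c <= p (d + x0) - h.

Definition extend_graph : set (X * R) :=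
  [set q | exists d h (t : R), H (d, h) /\ q = (d + t *: x0, h + t * c)].

Lemma extend_graph_functional x r s :
  extend_graph (x, r) -> extend_graph (x, s) -> r = s.
Proof.
case: domH => fH cH _.
move=> [d [h [t [Hdh [-> ->]]]]] [d' [h' [t' [Hdh' [ex ->]]]]].
have [tt'|tt'] := eqVneq t t'.
  move: ex; rewrite -tt' => /addIr dd'.
  by rewrite dd' in Hdh; rewrite (fH _ _ _ Hdh Hdh').
suff : H (x0, (t - t')^-1 * (- h + h')) by move/x0_notin.
have -> : x0 = (t - t')^-1 *: (- d + d').
  have -> : d' = d + t *: x0 - t' *: x0 by rewrite ex addrK.
  by rewrite addrA addKr -scalerBl scalerA mulVf ?scale1r // subr_eq0.
apply: dominated_graphZ => //.
by have := cH (-1) _ _ _ _ Hdh Hdh'; rewrite scaleN1r mulN1r.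
Qed.

Lemma extend_graph_dominated x r : extend_graph (x, r) -> r <= p x.
Proof.
case: domH => _ _ bH; move=> [d [h [t [Hdh [-> ->]]]]].
have [t0|t0|->] := ltgtP t 0; last by rewrite scale0r mul0r !addr0; exact: bH.
- have s0 : 0 < - t by rewrite oppr_gt0.
  have [+ _] := c_between (dominated_graphZ (- t)^-1 domH H00 Hdh).
  rewrite -(ler_pM2l s0) mulrBr mulrA mulfV ?gt_eqF // mul1r -p_homog //.
  by rewrite scalerBr scalerA mulfV ?gt_eqF // scale1r scaleNr opprK; lra.
- have [_] := c_between (dominated_graphZ t^-1 domH H00 Hdh).
  rewrite -(ler_pM2l t0) mulrBr mulrA mulfV ?gt_eqF // mul1r -p_homog //.
  by rewrite scalerDr scalerA mulfV ?gt_eqF // scale1r; lra.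
Qed.

Lemma extend_graphP : dominated_graph extend_graph.
Proof.
split; [exact: extend_graph_functional | | exact: extend_graph_dominated].
move=> a x y r s [d [h [t [Hdh [-> ->]]]]] [d' [h' [t' [Hdh' [-> ->]]]]].
exists (a *: d + d'), (a * h + h'), (a * t + t'); split.
  by case: domH => _ cH _; exact: cH.
by congr (_, _); [rewrite scalerDr scalerA addrACA scalerDl | ring].
Qed.

Lemma extend_graph_sup : H `<=` extend_graph.
Proof. by move=> [d h] Hdh; exists d, h, 0; rewrite scale0r mul0r !addr0. Qed.

Lemma extend_graph_x0 : extend_graph (x0, c).
Proof. by exists 0, 0, 1; rewrite scale1r mul1r !add0r. Qed.

End OneStepExtension.

Lemma dominated_graph_bigcup G (F : set (set (X * R))) : dominated_graph G ->
  (forall A, F A -> dominated_graph (A `|` G)) -> total_on F subset ->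
  dominated_graph (\bigcup_(A in F) A `|` G).
Proof.
move=> domG FP Ftot; pose U := \bigcup_(A in F) A.
have sub A : F A -> A `|` G `<=` U `|` G by move=> FA q [Aq|Gq]; [left; exists A | right].
have common q q' : (U `|` G) q -> (U `|` G) q' ->
    exists S, [/\ dominated_graph S, S q, S q' & S `<=` U `|` G].
  move=> [[A1 FA1 A1q]|Gq] [[A2 FA2 A2q']|Gq'].
  - have [s12|s21] := Ftot _ _ FA1 FA2.
    + by exists (A2 `|` G); split; [exact: FP | left; exact: s12 | left | exact: sub].
    + by exists (A1 `|` G); split; [exact: FP | left | left; exact: s21 | exact: sub].
  - by exists (A1 `|` G); split; [exact: FP | left | right | exact: sub].
  - by exists (A2 `|` G); split; [exact: FP | right | left | exact: sub].
  - by exists G; split => // q'' Gq''; right.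
split.
- by move=> x r s xr xs; have [S [[fS _ _] Sr Ss _]] := common _ _ xr xs; exact: fS Sr Ss.
- move=> a x y r s xr ys; have [S [[_ cS _] Sr Ss SU]] := common _ _ xr ys.
  exact/SU/cS.
- by move=> x r xr; have [S [[_ _ bS] Sr _ _]] := common _ _ xr xr; exact: bS.
Qed.

Lemma hahn_banach (Y : set X) (f : X -> R) : is_subspace Y -> linear_on Y f ->
  (forall y, Y y -> f y <= p y) ->
  exists F : X -> R, [/\ linear_on [set: X] F, forall x, F x <= p x
                       & forall y, Y y -> F y = f y].
Proof.
move=> sY lf fp; pose G := [set q | Y q.1 /\ q.2 = f q.1].
have domG : dominated_graph G.
  split.
  - by move=> x r s [_ /= ->] [_ /= ->].
  - move=> a x y r s [/= Yx ->] [/= Yy ->]; split => /=; [exact: sY.2 | by rewrite lf].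
  - by move=> x r [/= Yx ->]; exact: fp.
(* Maximizing over [A `|` G] rather than over graphs containing [G] keeps
   the empty chain admissible. *)
have [A [domAG Amax]] : exists A, dominated_graph (A `|` G) /\
    forall B, A `<` B -> ~ dominated_graph (B `|` G).
  by apply: Zorn_bigcup => F FP Ftot; exact: dominated_graph_bigcup.
have AG00 : (A `|` G) (0, 0) by right; split; [exact: sY.1 | rewrite /= (linear_on0 sY lf)].
have total x : exists r, (A `|` G) (x, r).
  apply: contrapT => nx.
  have x_notin r : ~ (A `|` G) (x, r) by move=> xr; apply: nx; exists r.
  have [c c_between] := extension_constant x domAG AG00.
  have domB := extend_graphP domAG AG00 x_notin c_between.
  have AGB := @extend_graph_sup (A `|` G) x c.
  apply: (Amax (extend_graph (A `|` G) x c)).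
    split=> [q Aq|BA]; first by apply: AGB; left.
    by apply: (x_notin c); left; apply: BA; exact: extend_graph_x0.
  by rewrite setUidl // => q Gq; apply: AGB; right.
have [F HF] := choice total; case: domAG => fH cH bH.
exists F; split.
- by move=> a x y _ _; apply: fH (HF _) _; exact: cH.
- by move=> x; exact: bH.
- by move=> y Yy; apply: fH (HF y) _; right.
Qed.

End HahnBanach.

Section SmoothSubspaces.
Variables (R : realType) (X : normedModType R).

Lemma contraction_extension (Y : set X) (f : X -> R) : is_subspace Y ->
  linear_on Y f -> (forall y, Y y -> `|f y| <= `|y|) ->
  exists F, contraction F /\ forall y, Y y -> F y = f y.
Proof.
move=> sY lf bf.
have normZ (t : R) (x : X) : 0 < t -> `|t *: x| = t * `|x|.
  by move=> t0; rewrite normrZ gtr0_norm.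
have fle y : Y y -> f y <= `|y| by move=> Yy; exact: le_trans (ler_norm _) (bf y Yy).
have [F [lF Fle FY]] := hahn_banach (@ler_normD _ _) normZ sY lf fle.
exists F; split => //; split => // x.
rewrite ler_norml Fle andbT lerNl -normrN.
by rewrite -mulN1r -(linear_onZ _ (subspaceT X) lF) // scaleN1r; exact: Fle.
Qed.

Lemma eps_smooth_subspace eps (Y : set X) : is_subspace Y ->
  eps_smooth [set: X] eps -> eps_smooth Y eps.
Proof.
move=> sY smoothX z Yz z1 f g [lf [nf fz]] [lg [ng gz]].
have bound h : linear_on Y h -> opnorm_on Y h = 1%E -> forall y, Y y -> `|h y| <= `|y|.
  by move=> lh nh; apply: opnorm_on_le1 => //; rewrite nh.
have [F [cF FY]] := contraction_extension sY lf (bound f lf nf).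
have [G [cG GY]] := contraction_extension sY lg (bound g lg ng).
have JF : in_J [set: X] z F by apply: contraction_in_J => //; rewrite FY // fz z1.
have JG : in_J [set: X] z G by apply: contraction_in_J => //; rewrite GY // gz z1.
apply: le_trans (smoothX z I z1 F G JF JG).
by apply: opnorm_on_sub => // y Yy /=; rewrite FY ?GY.
Qed.

End SmoothSubspaces.

Section Subsequences.
Variable R : realType.

Lemma increasing_seq_ge (phi : nat -> nat) : increasing_seq phi -> forall n, (n <= phi n)%N.
Proof.
move=> phi_incr; elim=> // n IH; apply: leq_ltn_trans IH _.
by have := phi_incr n.+1 n; rewrite ltnn leNgt => /negbFE.
Qed.

Lemma increasing_seq_comp (phi psi : nat -> nat) :
  increasing_seq phi -> increasing_seq psi -> increasing_seq (phi \o psi).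
Proof. by move=> phi_incr psi_incr m n /=; rewrite phi_incr; exact: psi_incr. Qed.

Lemma cvg_subseq (T : topologicalType) (u : nat -> T) (l : T) (phi : nat -> nat) :
  increasing_seq phi -> u @ \oo --> l -> u \o phi @ \oo --> l.
Proof.
move=> phi_incr ul; apply: cvg_comp ul => A [N _ NA].
by exists N => // n /= Nn; apply: NA; exact: leq_trans Nn (increasing_seq_ge phi_incr n).
Qed.

Lemma cvg_sum (V : normedModType R) n (f : 'I_n -> nat -> V) (l : 'I_n -> V) :
  (forall i, f i @ \oo --> l i) ->
  (fun m => \sum_(i < n) f i m) @ \oo --> \sum_(i < n) l i.
Proof. by move=> fl; apply: cvg_big => //; exact: add_continuous. Qed.

Lemma ler_term_sum n (a : 'I_n -> R) i : (forall j, 0 <= a j) -> a i <= \sum_(j < n) a j.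
Proof. by move=> a_ge0; rewrite (bigD1_ord i) //= lerDl sumr_ge0. Qed.

Lemma bolzano_weierstrass_ord n (u : 'I_n -> nat -> R) (M : R) :
  (forall i m, `|u i m| <= M) ->
  exists phi (l : 'I_n -> R), increasing_seq phi /\ forall i, u i \o phi @ \oo --> l i.
Proof.
elim: n u => [|n IH] u uM; first by exists id, (fun=> 0); split => // -[].
have [phi [l [phi_incr ul]]] := IH (fun j => u (lift ord0 j)) (fun j => uM _).
have u0_bd : bounded_fun (u ord0 \o phi).
  exists M; split => [|M' M'M m _]; first exact: num_real.
  exact: le_trans (uM _ _) (ltW M'M).
have [psi psi_incr /cvg_ex[/= l0 u0l]] := bolzano_weierstrass u0_bd.
exists (phi \o psi), (fun i => if unlift ord0 i is Some j then l j else l0).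
split => [|i]; first exact: increasing_seq_comp.
by case: unliftP => [j ->|->] //=; exact: cvg_subseq (ul j).
Qed.

End Subsequences.

Section ContractionLimits.
Variables (R : realType) (X : normedModType R).
Implicit Types (F : X -> R) (Fs : nat -> X -> R).

Lemma contraction_sum F n (c : 'I_n -> R) (e : 'I_n -> X) : contraction F ->
  F (\sum_(i < n) c i *: e i) = \sum_(i < n) c i * F (e i).
Proof.
move=> cF; elim/big_rec2: _ => [|i y Fy _ <-]; first exact: contraction0.
by case: cF => lF _; exact: lF.
Qed.

Lemma contraction_limit Fs F : (forall m, contraction (Fs m)) ->
  (forall x, (fun m => Fs m x) @ \oo --> F x) -> contraction F.
Proof.
move=> cFs FsF; split => [a x y _ _|x].
  have lin m : Fs m (a *: x + y) = a * Fs m x + Fs m y.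
    by case: (cFs m) => lF _; exact: lF.
  have Fsxy : (fun m => Fs m (a *: x + y)) @ \oo --> a * F x + F y.
    by rewrite (eq_cvg _ _ lin); apply: cvgD => //; exact: cvgMl_tmp.
  exact: (cvg_unique _ (FsF _) Fsxy).
apply: cvgr_to_le (cvg_norm (FsF x)) _; apply: nearW => m.
by case: (cFs m).
Qed.

Lemma cvg_contraction_apply Fs F (xs : nat -> X) x : (forall m, contraction (Fs m)) ->
  (fun m => Fs m x) @ \oo --> F x -> xs @ \oo --> x ->
  (fun m => Fs m (xs m)) @ \oo --> F x.
Proof.
move=> cFs FsF xsx.
have split_x m : Fs m (xs m) = Fs m x + Fs m (xs m - x).
  case: (cFs m) => lF _; have := lF 1 x (xs m - x) I I.
  by rewrite scale1r mul1r addrCA subrr addr0.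
rewrite (eq_cvg _ _ split_x) -[F x]addr0; apply: cvgD => //.
apply/norm_cvg0P; apply: (@squeeze_cvgr _ _ _ _ (fun=> 0) (fun m => `|xs m - x|)).
- by apply: nearW => m; rewrite normr_ge0 /=; case: (cFs m) => _; apply.
- exact: cvg_cst.
- by apply/norm_cvg0P/subr_cvg0.
Qed.

End ContractionLimits.

Section FiniteDimensional.
Variables (R : realType) (X : normedModType R).

Definition spanning n (e : 'I_n -> X) :=
  forall x, exists c : 'I_n -> R, x = \sum_(i < n) c i *: e i.

Definition independent n (e : 'I_n -> X) :=
  forall c : 'I_n -> R, \sum_(i < n) c i *: e i = 0 -> forall i, c i = 0.

Lemma finite_dimensional_basis : finite_dimensional X ->
  exists n (e : 'I_n -> X), spanning e /\ independent e.
Proof.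
move=> [n [e]]; elim: n e => [|n IH] e span_e.
  by exists 0, e; split => // c _ [].
have [ind|] := pselect (independent e); first by exists n.+1, e.
move=> /existsNP[c /not_implyP[c_rel /existsNP[j /eqP cj0]]].
apply: (IH (fun i => e (lift j i))) => x.
have [d ->] := span_e x.
have ej : e j = - (c j)^-1 *: \sum_(i < n) c (lift j i) *: e (lift j i).
  move: c_rel; rewrite (bigD1_ord j) //= => /eqP; rewrite addr_eq0 => /eqP cej.
  by rewrite -[e j]scale1r -(mulVf cj0) -scalerA cej scalerN scaleNr.
exists (fun i => d (lift j i) - d j * (c j)^-1 * c (lift j i)).
rewrite (bigD1_ord j) //= ej scalerA mulrN scaleNr addrC scaler_sumr -sumrB.
by apply: eq_bigr => i _; rewrite scalerBl !scalerA.
Qed.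

Lemma independent_comb_lower_bound n (e : 'I_n -> X) : independent e ->
  exists2 k, 0 < k & forall c, \sum_(i < n) `|c i| = 1 -> k <= `|\sum_(i < n) c i *: e i|.
Proof.
move=> ind; apply: contrapT => no_bound.
have small m : exists c : 'I_n -> R,
    \sum_(i < n) `|c i| = 1 /\ `|\sum_(i < n) c i *: e i| < m.+1%:R^-1.
  apply: contrapT => nc; apply: no_bound; exists m.+1%:R^-1 => // c c1.
  by rewrite leNgt; apply/negP => lt; apply: nc; exists c.
have [cs cs_small] := choice small.
have cs_bd i m : `|cs m i| <= 1.
  by rewrite -(cs_small m).1; exact: ler_term_sum (fun j => normr_ge0 (cs m j)).
have [phi [l [phi_incr csl]]] := bolzano_weierstrass_ord (u := fun i m => cs m i) cs_bd.
have l1 : \sum_(i < n) `|l i| = 1.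
  have norms : (fun m => \sum_(i < n) `|cs (phi m) i|) @ \oo --> \sum_(i < n) `|l i|.
    by apply: cvg_sum => i; exact: cvg_norm (csl i).
  have ones : (fun m => \sum_(i < n) `|cs (phi m) i|) @ \oo --> (1 : R).
    by under eq_cvg do rewrite (cs_small _).1; exact: cvg_cst.
  exact: cvg_unique _ norms ones.
have comb_l0 : `|\sum_(i < n) l i *: e i| = 0.
  have comb_phi : (fun m => `|\sum_(i < n) cs (phi m) i *: e i|) @ \oo -->
      `|\sum_(i < n) l i *: e i|.
    by apply: cvg_norm; apply: cvg_sum => i; exact: cvgZr_tmp (csl i).
  have comb_cs0 : (fun m => `|\sum_(i < n) cs m i *: e i|) @ \oo --> (0 : R).
    apply: (@squeeze_cvgr _ _ _ _ (fun=> 0) harmonic).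
    - by apply: nearW => m; rewrite normr_ge0 ltW //; exact: (cs_small m).2.
    - exact: cvg_cst.
    - exact: cvg_harmonic.
  exact: cvg_unique _ comb_phi (cvg_subseq phi_incr comb_cs0).
move/normr0_eq0/ind: comb_l0 => l0.
suff : \sum_(i < n) `|l i| = 0 by rewrite l1 => /eqP; rewrite oner_eq0.
by rewrite big1 // => i _; rewrite l0 normr0.
Qed.

Lemma independent_coord_bound n (e : 'I_n -> X) : independent e ->
  exists2 K, 0 < K & forall c, \sum_(i < n) `|c i| <= K * `|\sum_(i < n) c i *: e i|.
Proof.
move=> /independent_comb_lower_bound[k k0 kle].
exists k^-1 => [|c]; first by rewrite invr_gt0.
set s := \sum_(i < n) `|c i|.
have [->|s_neq0] := eqVneq s 0; first by apply: mulr_ge0; rewrite // invr_ge0 ltW.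
have s_gt0 : 0 < s by rewrite lt0r s_neq0 /=; apply: sumr_ge0 => i _.
have cs1 : \sum_(i < n) `|c i / s| = 1.
  under eq_bigr do rewrite normrM normfV (gtr0_norm s_gt0).
  by rewrite -mulr_suml mulfV.
have combZ : \sum_(i < n) (c i / s) *: e i = s^-1 *: \sum_(i < n) c i *: e i.
  by rewrite scaler_sumr; apply: eq_bigr => i _; rewrite scalerA mulrC.
have := kle _ cs1; rewrite combZ normrZ normfV (gtr0_norm s_gt0).
by rewrite !ler_pdivlMl // mulrC.
Qed.

Lemma bounded_seq_subseq_cvg (xs : nat -> X) (M : R) : finite_dimensional X ->
  (forall m, `|xs m| <= M) -> exists phi (x : X), increasing_seq phi /\ xs \o phi @ \oo --> x.
Proof.
move=> /finite_dimensional_basis[n [e [span ind]]] xsM.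
have [K K0 Kc] := independent_coord_bound ind.
have [c xsc] := choice (fun m => span (xs m)).
have c_bd i m : `|c m i| <= K * M.
  apply: le_trans (ler_term_sum i (fun j => normr_ge0 (c m j))) _.
  by apply: le_trans (Kc (c m)) _; rewrite -xsc ler_wpM2l // ltW.
have [phi [l [phi_incr cl]]] := bolzano_weierstrass_ord (u := fun i m => c m i) c_bd.
exists phi, (\sum_(i < n) l i *: e i); split => //.
have -> : xs \o phi = (fun m => \sum_(i < n) c (phi m) i *: e i).
  by apply: funext => m /=; rewrite -xsc.
by apply: cvg_sum => i; exact: cvgZr_tmp (cl i).
Qed.

Lemma contraction_seq_subseq_cvg (Fs : nat -> X -> R) : finite_dimensional X ->
  (forall m, contraction (Fs m)) ->
  exists phi F, [/\ increasing_seq phi, contraction F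
                  & forall x, (fun m => Fs (phi m) x) @ \oo --> F x].
Proof.
move=> [n [e span]] cFs.
have Fs_bd i m : `|Fs m (e i)| <= \sum_(j < n) `|e j|.
  by apply: le_trans (ler_term_sum i (fun j => normr_ge0 (e j))); case: (cFs m) => _.
have [phi [l [phi_incr Fsl]]] := bolzano_weierstrass_ord (u := fun i m => Fs m (e i)) Fs_bd.
have [c xc] := choice span.
pose F x := \sum_(i < n) c x i * l i.
have FsF x : (fun m => Fs (phi m) x) @ \oo --> F x.
  have -> : (fun m => Fs (phi m) x) = (fun m => \sum_(i < n) c x i * Fs (phi m) (e i)).
    by apply: funext => m; rewrite {1}(xc x) contraction_sum.
  by apply: cvg_sum => i; exact: cvgMl_tmp (Fsl i).
by exists phi, F; split => //; exact: contraction_limit FsF.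
Qed.

End FiniteDimensional.

Section DiameterTwoLimit.
Variables (R : realType) (X : normedModType R).
Variables (zs ws : nat -> X) (Fs Gs : nat -> X -> R) (lo : nat -> R).
Hypotheses (J : forall m, J_pair (zs m) (Fs m) (Gs m)) (ws1 : forall m, `|ws m| <= 1).
Hypotheses (gap : forall m, lo m < Fs m (ws m) - Gs m (ws m)) (lo2 : lo @ \oo --> (2 : R)).

Lemma J_pair_limit z w F G : zs @ \oo --> z -> ws @ \oo --> w ->
  (forall x, (fun m => Fs m x) @ \oo --> F x) ->
  (forall x, (fun m => Gs m x) @ \oo --> G x) ->
  [/\ J_pair z F G, `|w| <= 1 & 2 <= F w - G w].
Proof.
move=> zsz wsw FsF GsG.
have zs1 m : `|zs m| = 1 by case: (J m).
have cFs m : contraction (Fs m) by case: (J m).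
have cGs m : contraction (Gs m) by case: (J m).
have value_one (Hs : nat -> X -> R) (H : X -> R) : (forall m, Hs m (zs m) = 1) ->
    (forall m, contraction (Hs m)) -> (forall x, (fun m => Hs m x) @ \oo --> H x) -> H z = 1.
  move=> Hs1 cHs HsH.
  have ones : (fun m => Hs m (zs m)) @ \oo --> (1 : R).
    by under eq_cvg do rewrite Hs1; exact: cvg_cst.
  exact: cvg_unique _ (cvg_contraction_apply cHs (HsH z) zsz) ones.
split.
- split; [|exact: contraction_limit FsF|exact: contraction_limit GsG| |].
  + have ones : (fun m => `|zs m|) @ \oo --> (1 : R).
      by under eq_cvg do rewrite zs1; exact: cvg_cst.
    exact: cvg_unique _ (cvg_norm zsz) ones.
  + by apply: value_one FsF => // m; case: (J m).
  + by apply: value_one GsG => // m; case: (J m).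
- by apply: cvgr_to_le (cvg_norm wsw) _; exact: nearW.
- apply: ler_cvg_to lo2 (cvgB (cvg_contraction_apply cFs (FsF w) wsw)
                             (cvg_contraction_apply cGs (GsG w) wsw)) _.
  by apply: nearW => m; exact: ltW.
Qed.

End DiameterTwoLimit.

Section ApproximateSmoothness.
Variables (R : realType) (X : normedModType R).

Lemma diam_two_attained : finite_dimensional X ->
  (forall m : nat, exists z F G (w : X),
     [/\ J_pair z F G, `|w| <= 1 & 2 - m.+1%:R^-1 < F w - G w]) ->
  exists z F G (w : X), [/\ J_pair z F G, `|w| <= 1 & 2 <= F w - G w].
Proof.
move=> fdX /choice[zs /choice[Fs /choice[Gs /choice[ws wit]]]].
have J m : J_pair (zs m) (Fs m) (Gs m) by case: (wit m).
have ws1 m : `|ws m| <= 1 by case: (wit m).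
have zs1 m : `|zs m| <= 1 by case: (J m) => ->.
have cF m : contraction (Fs m) by case: (J m).
have cG m : contraction (Gs m) by case: (J m).
have [phi1 [z [incr1 zsz]]] := bounded_seq_subseq_cvg fdX zs1.
have [phi2 [w [incr2 wsw]]] := bounded_seq_subseq_cvg fdX (fun m => ws1 (phi1 m)).
have [phi3 [F [incr3 _ FsF]]] :=
  contraction_seq_subseq_cvg fdX (fun m => cF (phi1 (phi2 m))).
have [phi4 [G [incr4 _ GsG]]] :=
  contraction_seq_subseq_cvg fdX (fun m => cG (phi1 (phi2 (phi3 m)))).
have incr34 := increasing_seq_comp incr3 incr4.
have incr234 := increasing_seq_comp incr2 incr34.
pose psi m := phi1 (phi2 (phi3 (phi4 m))).
have two_sub_harmonic : (fun m => 2 - harmonic m) @ \oo --> (2 : R).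
  by rewrite -[X in _ --> X]subr0; apply: cvgB; [exact: cvg_cst | exact: cvg_harmonic].
have lo2 := cvg_subseq (increasing_seq_comp incr1 incr234) two_sub_harmonic.
exists z, F, G, w.
apply: (J_pair_limit (zs := zs \o psi) (ws := ws \o psi) (Fs := Fs \o psi)
                     (Gs := Gs \o psi) _ _ _ lo2).
- by move=> m; exact: J.
- by move=> m; exact: ws1.
- by move=> m; case: (wit (psi m)).
- exact: cvg_subseq incr234 zsz.
- exact: cvg_subseq incr34 wsw.
- by move=> x; exact: cvg_subseq incr4 (FsF x).
- exact: GsG.
Qed.

Lemma approx_smooth_of_planes : finite_dimensional X ->
  (forall Y : set X, two_dim_subspace Y -> approx_smooth Y) -> approx_smooth [set: X].
Proof.
move=> fdX planes; apply: contrapT => not_approx.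
have [m|z [F [G [w [J w1 gap]]]]] := diam_two_attained fdX.
  apply: not_eps_smoothT => smooth; apply: not_approx.
  exists (2 - m.+1%:R^-1); split => //.
  have inv_gt0 : 0 < m.+1%:R^-1 :> R by rewrite invr_gt0 ltr0n.
  have inv_le1 : m.+1%:R^-1 <= 1 :> R by rewrite invf_le1 ?ltr0n // ler1n.
  by rewrite subr_ge0 (le_trans inv_le1) ?ler1n //= ltrBlDr ltrDl.
have FGw : F w != G w by rewrite -subr_eq0 gt_eqF // (lt_le_trans _ gap).
have [eps [/andP[_ eps_lt2] smooth]] := planes _ (span2_two_dim J FGw).
exact: span2_not_eps_smooth J w1 (lt_le_trans eps_lt2 gap) smooth.
Qed.

End ApproximateSmoothness.

Theorem theorem2p7 (R : realType) (X : normedModType R) :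
  (forall eps : R, 0 <= eps < 2 ->
     (eps_smooth [set: X] eps <->
      forall Y : set X, two_dim_subspace Y -> eps_smooth Y eps)) /\
  (approx_smooth [set: X] ->
     forall Y : set X, two_dim_subspace Y -> approx_smooth Y) /\
  (finite_dimensional X ->
     (forall Y : set X, two_dim_subspace Y -> approx_smooth Y) ->
     approx_smooth [set: X]).
Proof.
split; [|split].
- move=> eps /andP[eps_ge0 _]; split; last exact: eps_smooth_of_planes.
  by move=> smoothX Y /two_dim_subspace_subspace sY; exact: eps_smooth_subspace.
- move=> [eps [eps_range smoothX]] Y /two_dim_subspace_subspace sY.
  by exists eps; split => //; exact: eps_smooth_subspace.
- exact: approx_smooth_of_planes.
Qed.
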